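(* Let $Q$ be a Jordan loop and $x\in Q$. Then for all integers $n\ge 0$: (i) $x^n x^2=x^{n+2}$; (ii) $x^n x^4=x^{n+4}$; (iii) $x^n x^8=x^{n+8}$ whenever $n\not\equiv 3 \pmod 4$; moreover, if $x^3x^8=x^{11}$, then $x^nx^8=x^{n+8}$ for all $n\ge 0$; (iv) for integers $k\ge 1$, $x^n x^{2^k}=x^{n+2^k}$ whenever $n\equiv 2^m \pmod{2^{k-1}}$ for some integer $m$ with $0\le m\le k-1$; (v) for integers $n\ge 1$, $x^{2^n}=(x^{2^{n-1}})^2$.
   Context: A loop is a set $Q$ with a binary operation (juxtaposition) and neutral element $e$ such that for all $a,b$ the equations $ax=b$, $ya=b$ have unique solutions. A Jordan loop is a commutative loop satisfying $x^2(yx)=(x^2y)x$. For $k\ge 0$, $x^k$ denotes the right-associated product $x(x(\cdots(xe)\cdots))$ with $k$ factors $x$ (so $x^0=e$, $x^1=x$). For an element $y$, $y^2=yy$. *)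

From mathcomp Require Import all_boot.
Set Implicit Arguments. Unset Strict Implicit. Unset Printing Implicit Defensive.

Definition is_loop (T : Type) (mul : T -> T -> T) (e : T) : Prop :=
  (forall a, mul e a = a /\ mul a e = a) /\
  (forall a b, exists! x, mul a x = b) /\
  (forall a b, exists! y, mul y a = b).

Definition is_jordan_loop (T : Type) (mul : T -> T -> T) (e : T) : Prop :=
  is_loop mul e /\
  (forall a b, mul a b = mul b a) /\
  (forall x y, mul (mul x x) (mul y x) = mul (mul (mul x x) y) x).

Definition lpow (T : Type) (mul : T -> T -> T) (e : T) (x : T) (k : nat) : T :=
  iter k (mul x) e.

From mathcomp Require Import all_boot.

(* Write [P k n] for x^n x^(2^k) = x^(n + 2^k).  The Jordan identity applied
   to a = x^(2^k) and y = x^n turns P k (2^k), P k n, P k (n + 2^(k+1)) and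
   P (k+1) n into P (k+1) (n + 2^k).  Hence P (k+1) is periodic modulo 2^k
   on any set closed under the relevant shifts, and it only remains to check
   the residues below 2^k: 0, which is trivial, and the powers 2^m with
   m < k, where commutativity reduces P (k+1) (2^m) to P m (2^(k+1)). *)

Definition pow2_residue (k n : nat) : Prop :=
  exists m, m <= k /\ n = 2 ^ m %[mod 2 ^ k].

Lemma modn_exp2 j i : j <= i -> 2 ^ i %% 2 ^ j = 0.
Proof. by move=> le_ji; apply/eqP; exact: dvdn_exp2l. Qed.

Lemma modnD_exp2 j i n : j <= i -> n + 2 ^ i = n %[mod 2 ^ j].
Proof. by move=> le_ji; rewrite -modnDmr modn_exp2 ?addn0. Qed.

Lemma pow2_residue_eqmod k n1 n2 :
  n1 = n2 %[mod 2 ^ k] -> pow2_residue k n1 -> pow2_residue k n2.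
Proof. by move=> eq_n [m [le_mk eq_m]]; exists m; rewrite -eq_n. Qed.

Lemma pow2_residue_exp2 j i : j <= i -> pow2_residue j (2 ^ i).
Proof. by move=> le_ji; exists j; rewrite modn_exp2 // modnn. Qed.

Lemma pow2_residue_le j k n :
  j <= k -> pow2_residue k n -> pow2_residue j n.
Proof.
move=> le_jk [m [le_mk eq_m]].
have dvd_jk : 2 ^ j %| 2 ^ k by rewrite dvdn_exp2l.
have eq_mj : n = 2 ^ m %[mod 2 ^ j].
  by rewrite -(modn_dvdm n dvd_jk) eq_m modn_dvdm.
have [le_mj | lt_jm] := leqP m j; first by exists m.
by exists j; rewrite eq_mj modnn modn_exp2 // ltnW.
Qed.

Lemma pow2_residue_lt k n : n < 2 ^ k -> pow2_residue k n ->
  n = 0 \/ exists2 m, m < k & n = 2 ^ m.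
Proof.
move=> lt_n [m [le_mk]]; rewrite modn_small //.
have [lt_mk | le_km] := ltnP m k.
  by rewrite modn_small ?ltn_exp2l // => ->; right; exists m.
have -> : m = k by apply/eqP; rewrite eqn_leq le_mk.
by rewrite modnn => ->; left.
Qed.

Lemma pow2_residue1 n : pow2_residue 1 n.
Proof. by case odd_n: (odd n); [exists 0 | exists 1]; rewrite !modn2 odd_n. Qed.

Lemma pow2_residue2 n : n %% 4 != 3 -> pow2_residue 2 n.
Proof.
move=> n_ne3; apply: (@pow2_residue_eqmod _ (n %% 4)); first exact: modn_mod.
move: n_ne3 (ltn_pmod n (isT : 0 < 4)).
by case: (n %% 4) => [|[|[|[|]]]] // _ _; [exists 2 | exists 0 | exists 1].
Qed.

Section JordanPowers.

Variables (T : Type) (mul : T -> T -> T) (e : T).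
Hypothesis mul1x : left_id e mul.
Hypothesis mulC : commutative mul.
Hypothesis jordan :
  forall x y, mul (mul x x) (mul y x) = mul (mul (mul x x) y) x.
Variable x : T.

Local Notation p := (lpow mul e x).

Definition pow2_law (k n : nat) : Prop := mul (p n) (p (2 ^ k)) = p (n + 2 ^ k).

Lemma pow2_law0 n : pow2_law 0 n.
Proof. by rewrite /pow2_law expn0 addn1 /= [mul x e]mulC mul1x mulC. Qed.

Lemma pow2_law_n0 k : pow2_law k 0.
Proof. exact: mul1x. Qed.

Lemma pow2_law_exp2C i j : pow2_law i (2 ^ j) -> pow2_law j (2 ^ i).
Proof. by rewrite /pow2_law mulC addnC. Qed.

Lemma pow2_lawS k n :
  pow2_law k (2 ^ k) -> pow2_law k n -> pow2_law k (n + 2 ^ k.+1) ->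
  pow2_law k.+1 n -> pow2_law k.+1 (n + 2 ^ k).
Proof.
rewrite /pow2_law => law_sq law_n law_n2 law_Sn.
have sq : mul (p (2 ^ k)) (p (2 ^ k)) = p (2 ^ k.+1).
  by rewrite law_sq expnS mul2n addnn.
have := jordan (p (2 ^ k)) (p n).
rewrite sq law_n [mul _ (p n)]mulC law_Sn law_n2 => jordan_n.
by rewrite mulC jordan_n addnAC.
Qed.

Lemma pow2_law_reduce k (A : nat -> Prop) :
  pow2_law k (2 ^ k) ->
  (forall n, A n -> pow2_law k n /\ pow2_law k (n + 2 ^ k.+1)) ->
  (forall n, A n -> 2 ^ k <= n -> A (n - 2 ^ k)) ->
  (forall n, A n -> n < 2 ^ k -> pow2_law k.+1 n) ->
  forall n, A n -> pow2_law k.+1 n.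
Proof.
move=> law_sq law_S A_sub law_small; elim/ltn_ind=> n IHn A_n.
have [|le_n] := ltnP n (2 ^ k); first exact: law_small.
have A_n' := A_sub n A_n le_n; have [law_n' law_n'2] := law_S _ A_n'.
rewrite -(subnK le_n); apply: pow2_lawS => //; apply: IHn => //.
by rewrite ltn_subrL expn_gt0 (leq_trans _ le_n) // expn_gt0.
Qed.

Lemma pow2_law_residue k n : pow2_residue (k - 1) n -> pow2_law k n.
Proof.
elim/ltn_ind: k n => -[_ n _ | k IHk]; first exact: pow2_law0.
rewrite subn1 succnK.
have law_k := IHk k (ltnSn k).
have res_k n : pow2_residue k n -> pow2_residue (k - 1) n.
  exact/pow2_residue_le/leq_subr.
apply: pow2_law_reduce => [|n res_n|n res_n le_n|n res_n lt_n].
- exact/law_k/pow2_residue_exp2/leq_subr.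
- split; apply/law_k/res_k => //.
  by apply: pow2_residue_eqmod res_n; rewrite modnD_exp2.
- by apply: pow2_residue_eqmod res_n; rewrite -{1}(subnK le_n) modnD_exp2.
have [-> | [m lt_mk ->]] := pow2_residue_lt _ _ lt_n res_n.
  exact: pow2_law_n0.
apply/pow2_law_exp2C/(IHk m (ltnW lt_mk))/pow2_residue_exp2.
exact: leq_trans (leq_subr 1 m) (ltnW (leqW lt_mk)).
Qed.

End JordanPowers.

Theorem lemma2p2 (T : Type) (mul : T -> T -> T) (e : T)
  (HQ : is_jordan_loop mul e) (x : T) :
  let p := lpow mul e x in
  (* (i) *)
  (forall n : nat, mul (p n) (p 2) = p (n + 2)) /\
  (* (ii) *)
  (forall n : nat, mul (p n) (p 4) = p (n + 4)) /\
  (* (iii) *)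
  ((forall n : nat, n %% 4 != 3 -> mul (p n) (p 8) = p (n + 8)) /\
   (mul (p 3) (p 8) = p 11 -> forall n : nat, mul (p n) (p 8) = p (n + 8))) /\
  (* (iv) *)
  (forall k n : nat, 1 <= k ->
     (exists m : nat, m <= k - 1 /\ n = 2 ^ m %[mod 2 ^ (k - 1)]) ->
     mul (p n) (p (2 ^ k)) = p (n + 2 ^ k)) /\
  (* (v) *)
  (forall n : nat, 1 <= n ->
     p (2 ^ n) = mul (p (2 ^ (n - 1))) (p (2 ^ (n - 1)))).
Proof.
move: HQ => [[unit _] [mulC jordan]] p.
have mul1x : left_id e mul by move=> a; case: (unit a).
have law := @pow2_law_residue T mul e mul1x mulC jordan x.
have law2 n : mul (p n) (p 4) = p (n + 4) := law 2 n (pow2_residue1 n).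
have law3 n : n %% 4 != 3 -> mul (p n) (p 8) = p (n + 8).
  by move=> n_ne3; apply/(law 3)/pow2_residue2.
split; first by move=> n; apply: (law 1); exists 0; rewrite !modn1.
split; first exact: law2.
split; first split=> [|law33 n]; first exact: law3.
  apply: (@pow2_law_reduce _ _ e mulC jordan x 2 (fun _ => True)) => //.
  - by move=> m _; split; apply: law2.
  - move=> m _ lt_m; have [-> // | m_ne3] := eqVneq m 3.
    by apply: (law3 m); rewrite modn_small.
split; first by move=> k n _; apply: law.
move=> n n_gt0; rewrite law; last exact/pow2_residue_exp2/leq_subr.
by rewrite addnn -mul2n -expnS subn1 prednK.
Qed.
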